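(* Let $f\in\mathrm{Homeo}(\mathbb T^2)$ be semiconjugate to a rigid rotation $R_\rho$ of $\mathbb S^1$ and assume the non-wandering set $\Omega(f)$ is externally transitive. Then the semiconjugacy is unique modulo rotations: for any two semiconjugacies $h_1,h_2$ from $f$ to $R_\rho$ there is a rigid rotation $R$ of $\mathbb S^1$ with $h_1=R\circ h_2$ on all of $\mathbb T^2$.
   Context: A semiconjugacy from $f$ to $R_\rho(x)=x+\rho$ is a continuous surjection $h:\mathbb T^2\to\mathbb S^1$ with $h\circ f=R_\rho\circ h$. An $f$-invariant set $\Omega$ is externally transitive if for all $x,y\in\Omega$ and neighbourhoods $U_x,U_y$ in $\mathbb T^2$ there is $n\in\mathbb N$ with $f^n(U_x)\cap U_y\ne\emptyset$. *)

(* Model: the circle S^1 = R/Z and the torus T^2 = R^2/Z^2 are represented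
   by their covering spaces R and R*R together with the quotient distances;
   maps on the quotients are maps on representatives that respect the
   equivalence relation ("distance 0"), and equalities on the quotient are
   stated as "distance 0". *)
From Stdlib Require Import Reals.
Open Scope R_scope.

(* distance on S^1 = R/Z : distance from x - y to the nearest integer *)
Definition cdist (x y : R) : R :=
  Rmin (frac_part (x - y)) (1 - frac_part (x - y)).

Definition ceq (x y : R) : Prop := cdist x y = 0.

Definition T2 := (R * R)%type.

Definition tdist (p q : T2) : R :=
  Rmax (cdist (fst p) (fst q)) (cdist (snd p) (snd q)).

Definition teq (p q : T2) : Prop := tdist p q = 0.

Definition T2_map (f : T2 -> T2) : Prop :=
  forall p q, teq p q -> teq (f p) (f q).

Definition T2_continuous (f : T2 -> T2) : Prop :=
  forall p eps, 0 < eps -> exists delta, 0 < delta /\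
    forall q, tdist p q < delta -> tdist (f p) (f q) < eps.

Definition T2_homeo (f : T2 -> T2) : Prop :=
  T2_map f /\ T2_continuous f /\
  exists g : T2 -> T2, T2_map g /\ T2_continuous g /\
    (forall p, teq (g (f p)) p) /\ (forall p, teq (f (g p)) p).

Fixpoint iter (n : nat) (f : T2 -> T2) (p : T2) : T2 :=
  match n with
  | O => p
  | S m => f (iter m f p)
  end.

Definition rot (rho x : R) : R := x + rho.

Definition semiconj (f : T2 -> T2) (rho : R) (h : T2 -> R) : Prop :=
  (forall p q, teq p q -> ceq (h p) (h q)) /\
  (forall p eps, 0 < eps -> exists delta, 0 < delta /\
     forall q, tdist p q < delta -> cdist (h p) (h q) < eps) /\
  (forall y : R, exists p, ceq (h p) y) /\
  (forall p, ceq (h (f p)) (rot rho (h p))).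

(* the non-wandering set Omega(f): every neighbourhood U of x meets
   f^n(U) for some n >= 1 (neighbourhoods taken to be open balls) *)
Definition nonwandering (f : T2 -> T2) (x : T2) : Prop :=
  forall eps, 0 < eps -> exists n : nat, (1 <= n)%nat /\
    exists y, tdist y x < eps /\ tdist (iter n f y) x < eps.

Definition externally_transitive (f : T2 -> T2) (Omega : T2 -> Prop) : Prop :=
  forall x y, Omega x -> Omega y ->
  forall ex ey, 0 < ex -> 0 < ey ->
    exists n : nat, (1 <= n)%nat /\
      exists z, tdist z x < ex /\ tdist (iter n f z) y < ey.

From Pilot Require Import Defs.
From Stdlib Require Import Reals Rtopology Lra Lia ZArith ClassicalEpsilon.
Open Scope R_scope.

(* If h1 and h2 are semiconjugacies from f to the same rotation R_rho, the
   circle-valued difference d = h1 - h2 is continuous and f-invariant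
   (d o f = d in S^1), because both h_i o f add the same rho.  So the proof
   reduces to a statement about continuous invariant circle-valued
   functions d:
   - d is constant on Omega(f): for x, y in Omega(f), external transitivity
     gives a point z near x with f^n z near y, and d z = d (f^n z);
   - every orbit accumulates (the torus is compact) at a point q, which is
     non-wandering, and d p = d q by invariance and continuity at q.
   Hence d is constant on the whole torus, which is the claim. *)

Lemma cdist_le x y (k : Z) : cdist x y <= Rabs (x - y - IZR k).
Proof.
  unfold cdist, frac_part.
  set (t := x - y). set (m := Int_part t).
  destruct (base_Int_part t) as [Hm1 Hm2]. fold m in Hm1, Hm2.
  replace (t - IZR k) with ((t - IZR m) + IZR (m - k)) by (rewrite minus_IZR; ring).
  destruct (Z_le_gt_dec 0 (m - k)) as [Hk | Hk].
  - apply IZR_le in Hk. eapply Rle_trans; [apply Rmin_l |].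
    rewrite Rabs_right; lra.
  - assert (Hk' : (m - k <= -1)%Z) by lia. apply IZR_le in Hk'.
    eapply Rle_trans; [apply Rmin_r |].
    rewrite Rabs_left; lra.
Qed.

Lemma cdist_attained x y : exists k : Z, cdist x y = Rabs (x - y - IZR k).
Proof.
  unfold cdist, frac_part.
  set (t := x - y). set (m := Int_part t).
  destruct (base_Int_part t) as [Hm1 Hm2]. fold m in Hm1, Hm2.
  unfold Rmin. destruct (Rle_dec (t - IZR m) (1 - (t - IZR m))).
  - exists m. rewrite Rabs_right; lra.
  - exists (m + 1)%Z. rewrite plus_IZR, Rabs_left; lra.
Qed.

Lemma cdist_nonneg x y : 0 <= cdist x y.
Proof. destruct (cdist_attained x y) as [k ->]. apply Rabs_pos. Qed.

Lemma cdist_eq0 x y : cdist x y <= 0 -> ceq x y.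
Proof. intro H. unfold ceq. pose proof (cdist_nonneg x y). lra. Qed.

Lemma cdist_refl x : ceq x x.
Proof.
  apply cdist_eq0. eapply Rle_trans; [apply (cdist_le x x 0) |].
  replace (x - x - IZR 0) with 0 by (simpl; ring). rewrite Rabs_R0. lra.
Qed.

Lemma cdist_sym x y : cdist x y = cdist y x.
Proof.
  assert (Hle : forall a b, cdist a b <= cdist b a).
  { intros a b. destruct (cdist_attained b a) as [k ->].
    eapply Rle_trans; [apply (cdist_le a b (- k)) |].
    rewrite opp_IZR. replace (a - b - - IZR k) with (- (b - a - IZR k)) by ring.
    rewrite Rabs_Ropp. lra. }
  apply Rle_antisym; apply Hle.
Qed.

Lemma cdist_tri x y z : cdist x z <= cdist x y + cdist y z.
Proof.
  destruct (cdist_attained x y) as [k1 ->]. destruct (cdist_attained y z) as [k2 ->].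
  eapply Rle_trans; [apply (cdist_le x z (k1 + k2)) |].
  rewrite plus_IZR.
  replace (x - z - (IZR k1 + IZR k2)) with ((x - y - IZR k1) + (y - z - IZR k2)) by ring.
  apply Rabs_triang.
Qed.

Lemma cdist_sub a b c e : cdist (a - b) (c - e) <= cdist a c + cdist b e.
Proof.
  destruct (cdist_attained a c) as [k1 ->]. destruct (cdist_attained b e) as [k2 ->].
  eapply Rle_trans; [apply (cdist_le _ _ (k1 - k2)) |].
  rewrite minus_IZR.
  replace (a - b - (c - e) - (IZR k1 - IZR k2))
    with ((a - c - IZR k1) + - (b - e - IZR k2)) by ring.
  eapply Rle_trans; [apply Rabs_triang |]. rewrite Rabs_Ropp. lra.
Qed.

Lemma cdist_diff a b c e : a - b = c - e -> cdist a b = cdist c e.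
Proof. intro H. unfold cdist. rewrite H. reflexivity. Qed.

Lemma cdist_frac x a : cdist x a <= Rabs (frac_part x - a).
Proof.
  eapply Rle_trans; [apply (cdist_le x a (Int_part x)) |].
  unfold frac_part. right. f_equal. ring.
Qed.

Lemma tdist_sym p q : tdist p q = tdist q p.
Proof. unfold tdist. rewrite (cdist_sym (fst p)), (cdist_sym (snd p)). reflexivity. Qed.

Lemma iter_add f (n m : nat) p : Defs.iter (n + m)%nat f p = Defs.iter n f (Defs.iter m f p).
Proof. induction n as [|n IH]; simpl; [reflexivity | rewrite IH; reflexivity]. Qed.

(* The coordinates reduced mod 1 lie in [0,1]; apply Bolzano-Weierstrass to
   the first coordinates, extract a subsequence phi converging in the first
   coordinate, then apply Bolzano-Weierstrass to the second coordinates
   along phi. *)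

Definition accumulation_point (s : nat -> T2) (q : T2) : Prop :=
  forall eps, 0 < eps -> forall N : nat, exists n, (N <= n)%nat /\ tdist (s n) q < eps.

Lemma inv_succ_small eps : 0 < eps -> exists K : nat, forall k, (K <= k)%nat -> / (INR k + 1) < eps.
Proof.
  intro Heps. destruct (archimed (/ eps)) as [Harch _].
  pose proof (Rinv_0_lt_compat _ Heps) as Hinv.
  exists (Z.to_nat (up (/ eps))). intros k Hk.
  assert (HK : / eps < INR k).
  { apply le_INR in Hk. rewrite INR_IZR_INZ, Z2Nat.id in Hk; [lra |].
    apply le_IZR. lra. }
  replace eps with (/ / eps) by (field; lra).
  apply Rinv_lt_contravar; [apply Rmult_lt_0_compat |]; lra.
Qed.

Lemma torus_accumulation (s : nat -> T2) : exists q, accumulation_point s q.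
Proof.
  set (u := fun n => frac_part (fst (s n))).
  set (v := fun n => frac_part (snd (s n))).
  assert (Hfp : forall r, 0 <= frac_part r <= 1) by (intro r; destruct (base_fp r); lra).
  destruct (Bolzano_Weierstrass u _ (compact_P3 0 1) (fun n => Hfp _)) as [a Ha].
  assert (Hu : forall k N : nat, exists n, (N <= n)%nat /\ Rabs (u n - a) < / (INR k + 1)).
  { intros k N.
    assert (Hp : 0 < / (INR k + 1)) by (apply Rinv_0_lt_compat; pose proof (pos_INR k); lra).
    destruct (Ha (disc a (mkposreal _ Hp)) N) as [n [Hn Hd]].
    - exists (mkposreal _ Hp). intros y Hy; exact Hy.
    - exists n; split; auto. }
  destruct (choice (fun k n => (k <= n)%nat /\ Rabs (u n - a) < / (INR k + 1))
              (fun k => Hu k k)) as [phi Hphi].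
  destruct (Bolzano_Weierstrass (fun k => v (phi k)) _ (compact_P3 0 1) (fun n => Hfp _))
    as [b Hb].
  exists (a, b). intros eps Heps N.
  destruct (inv_succ_small eps Heps) as [K HK].
  destruct (Hb (disc b (mkposreal _ Heps)) (max N K)) as [k [Hk Hd]].
  - exists (mkposreal _ Heps). intros y Hy; exact Hy.
  - destruct (Hphi k) as [Hk1 Hk2].
    exists (phi k). split; [lia |].
    unfold tdist. apply Rmax_lub_lt; simpl.
    + eapply Rle_lt_trans; [apply cdist_frac |].
      eapply Rlt_trans; [exact Hk2 | apply HK; lia].
    + eapply Rle_lt_trans; [apply cdist_frac | exact Hd].
Qed.

Definition circle_continuous (d : T2 -> R) : Prop :=
  forall p eps, 0 < eps -> exists delta, 0 < delta /\
    forall q, tdist p q < delta -> cdist (d p) (d q) < eps.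

Definition circle_invariant (f : T2 -> T2) (d : T2 -> R) : Prop :=
  forall p, ceq (d (f p)) (d p).

(* The difference of two semiconjugacies to the same rotation is a
   continuous invariant function: both sides of h_i o f = h_i + rho shift
   by the same rho. *)
Lemma semiconj_difference f rho h1 h2 :
  semiconj f rho h1 -> semiconj f rho h2 ->
  circle_continuous (fun p => h1 p - h2 p) /\ circle_invariant f (fun p => h1 p - h2 p).
Proof.
  intros [_ [C1 [_ I1]]] [_ [C2 [_ I2]]]. split.
  - intros p eps Heps.
    destruct (C1 p (eps / 2)) as [d1 [Hd1 H1]]; [lra |].
    destruct (C2 p (eps / 2)) as [d2 [Hd2 H2]]; [lra |].
    exists (Rmin d1 d2). split; [apply Rmin_pos; lra |].
    intros q Hq. eapply Rle_lt_trans; [apply cdist_sub |].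
    pose proof (H1 q (Rlt_le_trans _ _ _ Hq (Rmin_l d1 d2))).
    pose proof (H2 q (Rlt_le_trans _ _ _ Hq (Rmin_r d1 d2))). lra.
  - intro p. apply cdist_eq0.
    replace (h1 p - h2 p) with ((h1 p + rho) - (h2 p + rho)) by ring.
    eapply Rle_trans; [apply cdist_sub |].
    specialize (I1 p); specialize (I2 p). unfold ceq, rot in *. lra.
Qed.

Section InvariantFunctions.

Variable f : T2 -> T2.
Variable d : T2 -> R.
Hypothesis d_continuous : circle_continuous d.
Hypothesis d_invariant : circle_invariant f d.

Lemma invariant_iter n p : ceq (d (Defs.iter n f p)) (d p).
Proof.
  induction n as [|n IH]; simpl; [apply cdist_refl |].
  apply cdist_eq0. eapply Rle_trans; [apply (cdist_tri _ (d (Defs.iter n f p))) |].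
  rewrite d_invariant, IH. lra.
Qed.

Lemma invariant_chain x y z n :
  cdist (d x) (d y) <= cdist (d x) (d z) + cdist (d y) (d (Defs.iter n f z)).
Proof.
  pose proof (invariant_iter n z) as Hz. unfold ceq in Hz.
  pose proof (cdist_tri (d x) (d z) (d y)) as Hxzy.
  pose proof (cdist_tri (d z) (d (Defs.iter n f z)) (d y)) as Hzny.
  rewrite (cdist_sym (d z) (d (Defs.iter n f z))), Hz in Hzny.
  rewrite (cdist_sym (d (Defs.iter n f z)) (d y)) in Hzny. lra.
Qed.

Lemma invariant_constant_on_omega :
  externally_transitive f (nonwandering f) ->
  forall x y, nonwandering f x -> nonwandering f y -> ceq (d x) (d y).
Proof.
  intros Htrans x y Hx Hy. unfold ceq.
  apply Rle_antisym; [| apply cdist_nonneg]. apply Rnot_lt_le. intro Hgap.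
  set (eps := cdist (d x) (d y)) in *.
  destruct (d_continuous x (eps / 3)) as [dx [Hdx Cx]]; [lra |].
  destruct (d_continuous y (eps / 3)) as [dy [Hdy Cy]]; [lra |].
  destruct (Htrans x y Hx Hy dx dy Hdx Hdy) as [n [_ [z [Hzx Hzy]]]].
  rewrite tdist_sym in Hzx, Hzy.
  pose proof (Cx z Hzx). pose proof (Cy _ Hzy).
  pose proof (invariant_chain x y z n). unfold eps in *. lra.
Qed.

Lemma invariant_at_accumulation p q :
  accumulation_point (fun n => Defs.iter n f p) q -> ceq (d p) (d q).
Proof.
  intro Hq. unfold ceq.
  apply Rle_antisym; [| apply cdist_nonneg]. apply Rnot_lt_le. intro Hgap.
  destruct (d_continuous q _ Hgap) as [delta [Hdelta Cq]].
  destruct (Hq delta Hdelta 0%nat) as [n [_ Hn]].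
  rewrite tdist_sym in Hn. pose proof (Cq _ Hn).
  pose proof (invariant_chain p q p n). rewrite cdist_refl in *. lra.
Qed.

End InvariantFunctions.

(* Accumulation points of an orbit (omega-limit points) are non-wandering:
   two visits f^n1 p and f^n2 p (n2 > n1) near q give a point near q
   returning near q after n2 - n1 steps. *)
Lemma accumulation_nonwandering f p q :
  accumulation_point (fun n => Defs.iter n f p) q -> nonwandering f q.
Proof.
  intros Hq eps Heps.
  destruct (Hq eps Heps 0%nat) as [n1 [_ Hn1]].
  destruct (Hq eps Heps (S n1)) as [n2 [Hn2 Hn2']].
  exists (n2 - n1)%nat. split; [lia |].
  exists (Defs.iter n1 f p). split; [exact Hn1 |].
  rewrite <- iter_add. replace (n2 - n1 + n1)%nat with n2 by lia. exact Hn2'.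
Qed.

Lemma invariant_meets_omega f d p :
  circle_continuous d -> circle_invariant f d ->
  exists q, nonwandering f q /\ ceq (d p) (d q).
Proof.
  intros Hc Hi. destruct (torus_accumulation (fun n => Defs.iter n f p)) as [q Hq].
  exists q. split.
  - exact (accumulation_nonwandering f p q Hq).
  - exact (invariant_at_accumulation f d Hc Hi p q Hq).
Qed.

Lemma invariant_constant f d :
  externally_transitive f (nonwandering f) ->
  circle_continuous d -> circle_invariant f d ->
  exists c, forall p, ceq (d p) c.
Proof.
  intros Htrans Hc Hi.
  destruct (invariant_meets_omega f d (0, 0) Hc Hi) as [q0 [Hq0 _]].
  exists (d q0). intro p.
  destruct (invariant_meets_omega f d p Hc Hi) as [q [Hq Hpq]].
  pose proof (invariant_constant_on_omega f d Hc Hi Htrans q q0 Hq Hq0) as Hqq0.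
  apply cdist_eq0. unfold ceq in *.
  pose proof (cdist_tri (d p) (d q) (d q0)). lra.
Qed.

Theorem mainTheorem9 (f : T2 -> T2) (rho : R) :
  T2_homeo f ->
  (exists h : T2 -> R, semiconj f rho h) ->
  externally_transitive f (nonwandering f) ->
  forall h1 h2 : T2 -> R, semiconj f rho h1 -> semiconj f rho h2 ->
    exists c : R, forall p : T2, ceq (h1 p) (rot c (h2 p)).
Proof.
  intros _ _ Htrans h1 h2 H1 H2.
  destruct (semiconj_difference f rho h1 h2 H1 H2) as [Hc Hi].
  destruct (invariant_constant f _ Htrans Hc Hi) as [c Hconst].
  exists c. intro p. unfold ceq, rot.
  rewrite (cdist_diff _ _ (h1 p - h2 p) c) by ring.
  apply Hconst.
Qed.
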